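(* Let $p < q$ be primes with $p, q \geq 3$ and $n = pq$. Then the total graph $T(\Gamma(\mathbb{Z}_n))$ is very cost effective.
   Context: $\mathbb{Z}_n$ is the ring of residue classes modulo $n$. The zero-divisor graph $\Gamma(\mathbb{Z}_n)$ has as vertices the nonzero zero-divisors of $\mathbb{Z}_n$, two distinct vertices being adjacent iff their product is $0$. The total graph $T(G)$ of a graph $G$ has vertex set $V(G)\cup E(G)$, with two vertices adjacent iff they are adjacent vertices of $G$, adjacent edges of $G$ (sharing an endpoint), or a vertex and an edge of $G$ incident to each other. For a graph $H=(V,E)$ and $S\subseteq V$, a vertex $v\in S$ is very cost effective if $|N(v)\cap S| < |N(v)\cap (V\setminus S)|$; $S$ is very cost effective if every vertex of $S$ is. A bipartition $\{S, V\setminus S\}$ is very cost effective if both parts are very cost effective, and $H$ is very cost effective if it has a very cost effective bipartition. *)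

From mathcomp Require Import all_boot.
Set Implicit Arguments. Unset Strict Implicit. Unset Printing Implicit Defensive.

(* A finite simple graph is given by a vertex set [V : {set T}] inside a
   finType [T] and an adjacency relation [adj : rel T] (only its values on
   pairs of distinct vertices of V matter). *)

Definition zd_vertices (n : nat) : {set 'I_n} :=
  [set x : 'I_n | (val x != 0) &&
     [exists y : 'I_n, (val y != 0) && ((val x * val y) %% n == 0)]].

Definition zd_adj (n : nat) : rel 'I_n :=
  fun x y => (x != y) && ((val x * val y) %% n == 0).

Section Total.
Variables (T : finType) (V : {set T}) (adj : rel T).

Definition gedges : {set {set T}} :=
  [set e : {set T} | [exists u in V, exists v in V,
     [&& u != v, adj u v & e == [set u; v]]]].

Definition total_vertices : {set (T + {set T})} :=
  [set x | match x with inl v => v \in V | inr e => e \in gedges end].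

Definition total_adj : rel (T + {set T}) :=
  fun x y => match x, y with
  | inl u, inl v => (u != v) && adj u v
  | inr e, inr f => (e != f) && (e :&: f != set0)
  | inl v, inr e => v \in e
  | inr e, inl v => v \in e
  end.
End Total.

Section VCE.
Variables (U : finType) (W : {set U}) (r : rel U).

Definition nbhd (v : U) : {set U} := [set w in W | (w != v) && r v w].

Definition vce_vertex (S : {set U}) (v : U) : bool :=
  #|nbhd v :&: S| < #|nbhd v :&: (W :\: S)|.

Definition vce_set (S : {set U}) : bool := [forall v in S, vce_vertex S v].

Definition vce_bipartition (S : {set U}) : bool :=
  [&& S \subset W, vce_set S & vce_set (W :\: S)].

Definition very_cost_effective : Prop := exists S : {set U}, vce_bipartition S.
End VCE.

From mathcomp Require Import all_boot.
Set Implicit Arguments. Unset Strict Implicit. Unset Printing Implicit Defensive.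

(* Gamma(Z_pq) is the complete bipartite graph between the nonzero multiples
   of p and those of q.  Let G be any bipartite graph with sides A and B and no
   isolated vertex, whose edges are 2-coloured so that every vertex meets as
   many edges of each colour, and let S be A together with the edges of colour
   s.  A vertex a of A has no neighbour in S among the vertices, as many
   incident edges inside S as outside, and some neighbour in B outside S.  An
   edge ab of colour s has inside S the vertex a and d(a)/2 - 1 + d(b)/2 - 1
   edges, outside S the vertex b and d(a)/2 + d(b)/2 edges.  The complement of
   S is the same construction for B and the other colour.  For Gamma(Z_pq),
   colour {a, b} by the parity of a + b: since pq is odd, x |-> pq - x maps the
   neighbours of a to neighbours of a and flips the colour. *)

Lemma set2_eq_of_mem (T : finType) (u v a b : T) :
  a != b -> a \in [set u; v] -> b \in [set u; v] -> [set u; v] = [set a; b].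
Proof.
rewrite !inE => ab /orP[]/eqP au /orP[]/eqP bu; move: ab;
  rewrite au bu ?eqxx // => _; exact: setUC.
Qed.

Section TotalGraph.
Variables (T : finType) (V : {set T}) (adj : rel T).
Hypotheses (adj_sym : symmetric adj) (adj_irr : irreflexive adj).

Local Notation E := (gedges V adj).
Local Notation W := (total_vertices V adj).
Local Notation R := (total_adj adj).

Lemma gedgesP e :
  reflect (exists u v, [/\ u \in V, v \in V, adj u v & e = [set u; v]]) (e \in E).
Proof.
apply: (iffP idP).
- by rewrite inE => /exists_inP[u uV /exists_inP[v vV /and3P[_ uv /eqP ->]]]; exists u, v.
- move=> [u [v [uV vV uv ->]]]; rewrite inE; apply/exists_inP; exists u => //.
  apply/exists_inP; exists v; rewrite // uv eqxx !andbT.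
  by apply: contraTneq uv => ->; rewrite adj_irr.
Qed.

Lemma in_total_vertices_l v : (inl v \in W) = (v \in V).
Proof. by rewrite inE. Qed.

Lemma in_total_vertices_r e : (inr e \in W) = (e \in E).
Proof. by rewrite inE. Qed.

Lemma nbhd_ll u v : (inl v \in nbhd W R (inl u)) = (v \in V) && adj u v.
Proof.
rewrite inE in_total_vertices_l (inj_eq inl_inj) /=.
by case: (eqVneq v u) => [->|vu]; rewrite ?eqxx ?adj_irr ?andbF.
Qed.

Lemma nbhd_lr u e : (inr e \in nbhd W R (inl u)) = (e \in E) && (u \in e).
Proof. by rewrite inE in_total_vertices_r. Qed.

Lemma nbhd_rl e v : (inl v \in nbhd W R (inr e)) = (v \in V) && (v \in e).
Proof. by rewrite inE in_total_vertices_l. Qed.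

Lemma nbhd_rr e f :
  (inr f \in nbhd W R (inr e)) = [&& f \in E, f != e & e :&: f != set0].
Proof.
rewrite inE in_total_vertices_r (inj_eq inr_inj) /=.
by case: (eqVneq f e) => [->|]; rewrite ?eqxx ?andbF.
Qed.

Lemma gedges_set2 f a b : f \in E -> a != b -> a \in f -> b \in f -> f = [set a; b].
Proof. by case/gedgesP=> u [v [_ _ _ ->]]; apply: set2_eq_of_mem. Qed.

Variable col : {set T} -> bool.

Definition edges_at v s : {set {set T}} := [set e in E | (v \in e) && (col e == s)].

Lemma in_edges_at f v s : (f \in edges_at v s) = [&& f \in E, v \in f & col f == s].
Proof. by rewrite inE. Qed.

Lemma card_edges_at v s : v \in V ->
  #|edges_at v s| = #|[set w in V | adj v w && (col [set v; w] == s)]|.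
Proof.
move=> vV; have -> : edges_at v s =
    (fun w => [set v; w]) @: [set w in V | adj v w && (col [set v; w] == s)].
  apply/setP => e; apply/idP/imsetP.
  - rewrite inE => /andP[/gedgesP[x [y [xV yV xy ->]]]].
    rewrite !inE => /andP[/orP[]/eqP-> cs].
    + by exists y; rewrite // inE yV xy cs.
    + by exists x; rewrite 1?setUC // inE xV adj_sym xy setUC cs.
  - case=> w; rewrite inE => /and3P[wV vw cw] ->; rewrite inE cw set21 !andbT.
    by apply/gedgesP; exists v, w.
apply: card_in_imset => w w'; rewrite !inE => /and3P[_ vw _] _ eww'.
have : w \in [set v; w'] by rewrite -eww' set22.
by rewrite !inE => /orP[]/eqP // wv; rewrite wv adj_irr in vw.
Qed.

Section Bipartite.
Variable A : {set T}.
Hypothesis bipartite : {in V &, forall u v, adj u v -> (u \in A) != (v \in A)}.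
Hypothesis no_isolated : {in V, forall v, exists2 w, w \in V & adj v w}.
Hypothesis balanced : {in V, forall v, #|edges_at v true| = #|edges_at v false|}.

Definition part s : {set T + {set T}} :=
  [set x | match x with inl v => v \in V :&: A | inr e => (e \in E) && (col e == s) end].

Lemma balancedN v s : v \in V -> #|edges_at v s| = #|edges_at v (~~ s)|.
Proof. by move=> /balanced; case: s. Qed.

Lemma bipartite_edge e : e \in E ->
  exists a b, [/\ a \in V :&: A, b \in V :\: A & e = [set a; b]].
Proof.
case/gedgesP=> u [v [uV vV uv ->]]; have := bipartite uV vV uv.
case: (boolP (u \in A)) => uA /= vA.
- by exists u, v; rewrite !inE uV vV uA vA.
- by exists v, u; rewrite !inE uV vV uA (negPn vA) setUC.
Qed.

Lemma in_part_l s v : (inl v \in part s) = (v \in V :&: A).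
Proof. by rewrite inE. Qed.

Lemma in_part_r s e : (inr e \in part s) = (e \in E) && (col e == s).
Proof. by rewrite inE. Qed.

Lemma vce_part_vertex s a : a \in V :&: A -> vce_vertex W R (part s) (inl a).
Proof.
rewrite inE => /andP[aV aA]; have [b bV ab] := no_isolated aV.
have bA : b \notin A by have := bipartite aV bV ab; rewrite aA.
have nbhd_in : nbhd W R (inl a) :&: part s \subset inr @: edges_at a s.
  apply/subsetP => -[y|f]; rewrite inE => /andP[].
  - rewrite nbhd_ll in_part_l inE => /andP[yV ay] /andP[_ yA].
    by have := bipartite aV yV ay; rewrite aA yA.
  - rewrite nbhd_lr in_part_r => /andP[fE af] /andP[_ cf].
    by apply/imsetP; exists f; rewrite // inE fE af cf.
have nbhd_out :
    inl b |: (inr @: edges_at a (~~ s)) \subset nbhd W R (inl a) :&: (W :\: part s).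
  apply/subsetP => x; rewrite in_setU1 in_setI in_setD => /orP[/eqP-> | /imsetP[f + ->]].
  - by rewrite nbhd_ll in_total_vertices_l in_part_l inE bV ab (negbTE bA).
  - rewrite inE => /and3P[fE af cf].
    by rewrite nbhd_lr in_total_vertices_r in_part_r fE af (eqP cf); case: (s).
rewrite /vce_vertex (leq_ltn_trans (subset_leq_card nbhd_in)) //.
apply: leq_trans (subset_leq_card nbhd_out).
rewrite cardsU1 !card_imset; try exact: inr_inj.
have /negPf-> : inl b \notin inr @: edges_at a (~~ s) by apply/imsetP => -[].
by rewrite (balancedN s aV).
Qed.

Lemma nbhd_edge_part s a b : b \notin A ->
  nbhd W R (inr [set a; b]) :&: part s \subset
    inl a |: inr @: ((edges_at a s :|: edges_at b s) :\ [set a; b]).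
Proof.
move=> bA; apply/subsetP => -[y|f]; rewrite in_setI in_setU1 => /andP[].
- rewrite nbhd_rl in_part_l in_setI (inj_eq inl_inj) => /andP[_ ye] /andP[_ yA].
  by case/set2P: ye yA => ->; rewrite ?eqxx // (negbTE bA).
- rewrite nbhd_rr in_part_r => /and3P[fE fe /set0Pn[z /setIP[/set2P[]-> zf]]] /andP[_ cf].
  all: apply/orP; right; apply/imsetP; exists f => //.
  all: by rewrite in_setD1 fe in_setU !in_edges_at fE zf cf ?orbT.
Qed.

Lemma nbhd_edge_part_compl s a b : b \in V -> b \notin A -> col [set a; b] = s ->
  inl b |: inr @: (edges_at a (~~ s) :|: edges_at b (~~ s)) \subset
    nbhd W R (inr [set a; b]) :&: (W :\: part s).
Proof.
move=> bV bA ce; apply/subsetP => x; rewrite in_setU1 in_setI in_setD.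
case/orP=> [/eqP-> | /imsetP[f + ->]].
  by rewrite nbhd_rl in_total_vertices_l in_part_l set22 in_setI bV (negbTE bA) andbT.
have out_edge v : v \in [set a; b] -> f \in edges_at v (~~ s) ->
    [&& inr f \in nbhd W R (inr [set a; b]), inr f \notin part s & inr f \in W].
  move=> ve; rewrite in_edges_at => /and3P[fE vf /eqP cf].
  have fe : f != [set a; b] by apply/eqP => fe; move: cf; rewrite fe ce; case: (s).
  have ef : [set a; b] :&: f != set0 by apply/set0Pn; exists v; rewrite inE ve vf.
  by rewrite nbhd_rr in_part_r in_total_vertices_r fE fe ef cf; case: (s).
by case/setUP; apply: out_edge; rewrite ?set21 ?set22.
Qed.

Lemma vce_part_edge s e : e \in E -> col e = s -> vce_vertex W R (part s) (inr e).
Proof.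
move=> eE ce; have [a [b [aVA bVA eab]]] := bipartite_edge eE; subst e.
move: aVA bVA; rewrite !inE => /andP[aV aA] /andP[bA bV].
have ab : a != b by apply: contraNneq bA => <-.
have eEa : [set a; b] \in edges_at a s by rewrite in_edges_at eE set21 ce eqxx.
have disj : edges_at a (~~ s) :&: edges_at b (~~ s) = set0.
  apply/setP => f; rewrite in_setI in_set0 !in_edges_at.
  apply/negP => /andP[/and3P[fE af cf] /and3P[_ bf _]].
  by move: cf; rewrite (gedges_set2 fE ab af bf) ce; case: (s).
have card_in : #|(edges_at a s :|: edges_at b s) :\ [set a; b]| <
               #|edges_at a s| + #|edges_at b s|.
  apply: leq_trans (leq_card_setU _ _).1.
  by rewrite (cardsD1 [set a; b] (_ :|: _)) in_setU eEa.
rewrite /vce_vertex (leq_ltn_trans (subset_leq_card (nbhd_edge_part s a bA))) //.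
apply: leq_trans (subset_leq_card (nbhd_edge_part_compl bV bA ce)).
rewrite !cardsU1 !card_imset; try exact: inr_inj.
have /negPf-> : inl b \notin inr @: (edges_at a (~~ s) :|: edges_at b (~~ s)).
  by apply/imsetP => -[].
rewrite cardsU disj cards0 subn0 -(balancedN s aV) -(balancedN s bV) add1n ltnS.
exact: leq_trans (leq_add (leq_b1 _) (leqnn _)) card_in.
Qed.

Lemma vce_part s : vce_set W R (part s).
Proof.
apply/forall_inP => -[v|e]; rewrite inE; first exact: vce_part_vertex.
by case/andP=> eE /eqP; apply: vce_part_edge.
Qed.

End Bipartite.

Lemma part_subset A s : part A s \subset W.
Proof. by apply/subsetP => -[v|e]; rewrite !inE => /andP[]. Qed.

Lemma setD_part A s : W :\: part A s = part (~: A) (~~ s).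
Proof.
apply/setP => -[v|e]; rewrite in_setD.
- by rewrite in_total_vertices_l !in_part_l !inE; case: (v \in V); case: (v \in A).
- by rewrite in_total_vertices_r !in_part_r; case: (e \in E); case: (col e); case: s.
Qed.

Theorem bipartite_total_graph_vce (A : {set T}) :
  {in V &, forall u v, adj u v -> (u \in A) != (v \in A)} ->
  {in V, forall v, exists2 w, w \in V & adj v w} ->
  {in V, forall v, #|edges_at v true| = #|edges_at v false|} ->
  very_cost_effective W R.
Proof.
move=> bipA no_isolated balanced; exists (part A false).
have bipAC : {in V &, forall u v, adj u v -> (u \in ~: A) != (v \in ~: A)}.
  by move=> u v uV vV uv; rewrite !inE (inj_eq negb_inj) bipA.
by rewrite /vce_bipartition part_subset setD_part !vce_part.
Qed.

End TotalGraph.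

(* For [x = 0] the default [x] is returned, which is again [-x] in Z_n. *)
Definition ord_opp n (x : 'I_n) : 'I_n := insubd x (n - x).

Lemma val_ord_opp n (x : 'I_n) : 0 < x -> val (ord_opp x) = n - x.
Proof. by move=> x0; rewrite val_insubd ltn_subrL x0 (leq_ltn_trans _ (ltn_ord x)). Qed.

Lemma ord_oppK n (x : 'I_n) : 0 < x -> ord_opp (ord_opp x) = x.
Proof.
move=> x0; have x'0 : 0 < ord_opp x by rewrite val_ord_opp // subn_gt0.
by apply: val_inj; rewrite val_ord_opp // val_ord_opp // subKn // ltnW.
Qed.

Lemma dvdn_ord_opp n d (x : 'I_n) : d %| n -> 0 < x -> (d %| ord_opp x) = (d %| x).
Proof. by move=> dn x0; rewrite val_ord_opp // dvdn_subr // ltnW. Qed.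

Lemma odd_add_ord_opp n c (x : 'I_n) : odd n -> 0 < x ->
  odd (c + ord_opp x) = ~~ odd (c + x).
Proof. by move=> n_odd x0; rewrite val_ord_opp // !oddD oddB ?n_odd ?addbN // ltnW. Qed.

Lemma card_parity_ord_opp n (X : {set 'I_n}) c s : odd n ->
  {in X, forall x : 'I_n, 0 < x} -> {in X, forall x, ord_opp x \in X} ->
  #|[set x in X | odd (c + x) == s]| <= #|[set x in X | odd (c + x) == ~~ s]|.
Proof.
move=> n_odd X_pos X_opp.
have opp_inj : {in [set x in X | odd (c + x) == s] &, injective (@ord_opp n)}.
  by apply: (can_in_inj (g := @ord_opp n)) => x; rewrite inE => /andP[/X_pos/ord_oppK].
rewrite -(card_in_imset opp_inj); apply/subset_leq_card/subsetP => _ /imsetP[x + ->].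
rewrite !inE => /andP[xX /eqP <-].
by rewrite X_opp // odd_add_ord_opp ?eqxx // X_pos.
Qed.

Definition sum_parity n (e : {set 'I_n}) : bool := odd (\sum_(x in e) val x).

Lemma sum_parity2 n (a b : 'I_n) : a != b -> sum_parity [set a; b] = odd (a + b).
Proof. by move=> ab; rewrite /sum_parity big_setU1 ?big_set1 // inE. Qed.

Lemma zd_adj_sym n : symmetric (@zd_adj n).
Proof. by move=> x y; rewrite /zd_adj eq_sym mulnC. Qed.

Lemma zd_adj_irr n : irreflexive (@zd_adj n).
Proof. by move=> x; rewrite /zd_adj eqxx. Qed.

Section ZeroDivisorGraphPQ.
Variables p q : nat.
Hypotheses (p_pr : prime p) (q_pr : prime q) (p_neq_q : p != q).
Local Notation N := (p * q).
Local Notation V := (zd_vertices N).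

Lemma Euclid_dvd_pq m n :
  p * q %| m * n -> ((p %| m) || (p %| n)) && ((q %| m) || (q %| n)).
Proof.
move=> pq_mn; rewrite -!Euclid_dvdM //.
by rewrite (dvdn_trans (dvdn_mulr q (dvdnn p))) ?(dvdn_trans (dvdn_mull p (dvdnn q))).
Qed.

Lemma ord_pq_ndvd (x : 'I_N) : val x != 0 -> ~~ ((p %| x) && (q %| x)).
Proof.
move=> x0; apply/negP => /andP[px qx].
have cop : coprime p q by rewrite prime_coprime // dvdn_prime2.
have : N %| x by rewrite Gauss_dvd // px qx.
by move/(dvdn_leq _); rewrite lt0n x0 leqNgt ltn_ord => /(_ isT).
Qed.

Lemma in_zd_vertices (x : 'I_N) : (x \in V) = (val x != 0) && ((p %| x) || (q %| x)).
Proof.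
rewrite inE; apply/andP/andP => -[x0 x_zd]; split => //.
- case/existsP: x_zd => y /andP[y0 /Euclid_dvd_pq].
  by have := ord_pq_ndvd y0; case: (p %| x); case: (q %| x); case: (p %| y); case: (q %| y).
- case/orP: x_zd => [px | qx]; apply/existsP.
  + exists (Ordinal (ltn_Pmull (prime_gt1 p_pr) (prime_gt0 q_pr))).
    by rewrite /= -lt0n prime_gt0 //; apply: dvdn_mul.
  + exists (Ordinal (ltn_Pmulr (prime_gt1 q_pr) (prime_gt0 p_pr))).
    by rewrite /= -lt0n prime_gt0 // mulnC; apply: dvdn_mul.
Qed.

Lemma zd_adjE (x y : 'I_N) : x \in V -> y \in V -> zd_adj x y = ((p %| x) != (p %| y)).
Proof.
rewrite !in_zd_vertices => /andP[x0 xpq] /andP[y0 ypq].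
move: (ord_pq_ndvd x0) (ord_pq_ndvd y0) => x_pq y_pq.
apply/andP/idP => [[_ /Euclid_dvd_pq] | pxy].
  by move: xpq ypq x_pq y_pq; case: (p %| x); case: (q %| x); case: (p %| y); case: (q %| y).
split; first by apply: contraTneq pxy => ->; rewrite eqxx.
have [px | npx] := boolP (p %| x).
- have qy : q %| y by case/orP: ypq => // py; rewrite px py in pxy.
  exact: dvdn_mul.
- have qx : q %| x by case/orP: xpq => // px; rewrite px in npx.
  have py : p %| y by move: pxy; rewrite (negbTE npx); case: (p %| y).
  by rewrite mulnC; apply: dvdn_mul.
Qed.

Lemma zd_no_isolated : {in V, forall x, exists2 y, y \in V & zd_adj x y}.
Proof.
move=> x; rewrite inE => /andP[x0 /existsP[y /andP[y0 Nxy]]]; exists y.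
  by rewrite inE y0; apply/existsP; exists x; rewrite x0 mulnC.
rewrite /zd_adj Nxy andbT; apply: contraTneq (ord_pq_ndvd x0) => xy.
by move: (Euclid_dvd_pq Nxy); rewrite -xy !orbb negbK.
Qed.

Lemma zd_neighbour_ord_opp v w : v \in V -> w \in V -> zd_adj v w ->
  (ord_opp w \in V) && zd_adj v (ord_opp w).
Proof.
move=> vV wV vw; have w0 : 0 < w by move: wV; rewrite in_zd_vertices lt0n => /andP[].
have [pN qN] : p %| N /\ q %| N by rewrite dvdn_mulr ?dvdn_mull.
have w'V : ord_opp w \in V.
  move: wV; rewrite !in_zd_vertices !dvdn_ord_opp // => /andP[_ ->].
  by rewrite andbT -lt0n val_ord_opp // subn_gt0.
by rewrite w'V zd_adjE // dvdn_ord_opp // -zd_adjE.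
Qed.

Hypothesis pq_odd : odd N.

Lemma zd_balanced :
  {in V, forall v, #|edges_at V (@zd_adj N) (@sum_parity N) v true| =
                   #|edges_at V (@zd_adj N) (@sum_parity N) v false|}.
Proof.
move=> v vV; rewrite !(card_edges_at (@zd_adj_sym N) (@zd_adj_irr N)) //.
pose X := [set w in V | zd_adj v w].
have parity_X (s : bool) : [set w in V | zd_adj v w && (sum_parity [set v; w] == s)] =
                  [set w in X | odd (v + w) == s].
  apply/setP => w; rewrite [LHS]inE [RHS]inE [w \in X]inE -andbA.
  by case vw: (zd_adj v w); rewrite ?andbF // sum_parity2 //; case/andP: vw.
have X_pos : {in X, forall w : 'I_N, 0 < w}.
  by move=> w; rewrite inE in_zd_vertices lt0n => /andP[/andP[]].
have X_opp : {in X, forall w, ord_opp w \in X}.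
  by move=> w /setIdP[wV vw]; rewrite inE zd_neighbour_ord_opp.
rewrite !parity_X; apply/eqP; rewrite eqn_leq.
by rewrite (card_parity_ord_opp _ true) ?(card_parity_ord_opp _ false).
Qed.

Theorem zd_total_graph_vce :
  very_cost_effective (total_vertices V (@zd_adj N)) (total_adj (@zd_adj N)).
Proof.
apply: (bipartite_total_graph_vce (@zd_adj_irr N) (A := [set x : 'I_N | p %| x])).
- by move=> x y xV yV; rewrite zd_adjE // !inE.
- exact: zd_no_isolated.
- exact: zd_balanced.
Qed.

End ZeroDivisorGraphPQ.

Theorem mainTheorem9 (p q : nat) :
  prime p -> prime q -> 3 <= p -> p < q ->
  very_cost_effective
    (total_vertices (zd_vertices (p * q)) (@zd_adj (p * q)))
    (total_adj (@zd_adj (p * q))).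
Proof.
move=> p_pr q_pr p_ge3 p_lt_q.
have odd_prime r : prime r -> 3 <= r -> odd r by case/even_prime => [->|].
apply: zd_total_graph_vce => //; first by rewrite neq_ltn p_lt_q.
by rewrite oddM !odd_prime // (leq_trans p_ge3 (ltnW p_lt_q)).
Qed.
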